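(* Let $(\Omega,\mu)$ be a measure space, $E\subset\Omega$ with $0<\mu E<\infty$, and let $(v_k)_{k\ge1}$ be a sequence in $L^2_{\mathbb R}(\Omega,\mu)$ such that $\sum_{k\ge1}|v_k(x)|^2\le M^2$ for all $x\in E$, for some constant $M$. Then (1) the map $V:f\mapsto((f,v_k))_{k\ge1}$ is a compact operator from $L^2(E,\mu)$ to $\ell^2$, and (2) the map $V^*:(c_k)_{k\ge1}\mapsto\sum_{k\ge1}c_kv_k|_E$ is a compact operator from $\ell^2$ to $L^2(E,\mu)$.
   Context: Functions in $L^2(E,\mu)$ are regarded as functions on $\Omega$ vanishing outside $E$, and $(f,g)=\int fg\,d\mu$. *)

From HB Require Import structures.
From mathcomp Require Import all_boot all_order all_algebra.
From mathcomp Require Import all_classical all_reals all_analysis.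
Set Implicit Arguments. Unset Strict Implicit. Unset Printing Implicit Defensive.
Import Order.TTheory GRing.Theory Num.Theory.
Import numFieldNormedType.Exports.
Local Open Scope classical_set_scope.
Local Open Scope ring_scope.

Definition sqL2 {d} {T : measurableType d} {R : realType}
  (mu : {measure set T -> \bar R}) (f : T -> R) : \bar R :=
  (\int[mu]_x ((f x) ^+ 2)%:E)%E.

Definition L2 {d} {T : measurableType d} {R : realType}
  (mu : {measure set T -> \bar R}) : set (T -> R) :=
  [set f | measurable_fun setT f /\ (sqL2 mu f < +oo)%E].

(* L^2(E, mu), regarded as functions on Omega vanishing outside E *)
Definition L2on {d} {T : measurableType d} {R : realType}
  (mu : {measure set T -> \bar R}) (E : set T) : set (T -> R) :=
  [set f | L2 mu f /\ (forall x, ~ E x -> f x = 0)].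

Definition L2norm {d} {T : measurableType d} {R : realType}
  (mu : {measure set T -> \bar R}) (f : T -> R) : R :=
  Num.sqrt (fine (sqL2 mu f)).

Definition L2inner {d} {T : measurableType d} {R : realType}
  (mu : {measure set T -> \bar R}) (f g : T -> R) : R :=
  fine (\int[mu]_x (f x * g x)%:E)%E.

Definition ell2 {R : realType} : set (nat -> R) :=
  [set c | (\sum_(k <oo) ((c k) ^+ 2)%:E < +oo)%E].

Definition ell2norm {R : realType} (c : nat -> R) : R :=
  Num.sqrt (fine (\sum_(k <oo) ((c k) ^+ 2)%:E)%E).

Definition compact_operator {R : realType} {X Y : lmodType R}
  (SX : set X) (nX : X -> R) (SY : set Y) (nY : Y -> R) (A : X -> Y) : Prop :=
  [/\ (forall x, SX x -> SY (A x)),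
      (forall (a : R) x y, SX x -> SX y ->
          A (a *: x + y) = a *: A x + A y)
    & (forall u : nat -> X, (forall n, SX (u n)) ->
         (exists B : R, forall n, nX (u n) <= B) ->
         exists (phi : nat -> nat) (y : Y),
           [/\ SY y, {homo phi : m n / (m < n)%N >-> (m < n)%N}
             & (fun n => nY (A (u (phi n)) - y)) @ \oo --> (0 : R)])].

Definition Vop {d} {T : measurableType d} {R : realType}
  (mu : {measure set T -> \bar R}) (v : nat -> T -> R) (f : T -> R) : nat -> R :=
  fun k => L2inner mu f (v k).

Definition Vpartial {d} {T : measurableType d} {R : realType}
  (E : set T) (v : nat -> T -> R) (c : nat -> R) (n : nat) : T -> R :=
  fun x => \1_E x * \sum_(k < n) c k * v k x.

Definition Vstar {d} {T : measurableType d} {R : realType}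
  (E : set T) (v : nat -> T -> R) (c : nat -> R) : T -> R :=
  fun x => \1_E x * limn (fun n => \sum_(k < n) c k * v k x).

(* Write t_k for the squared L^2 norm of v_k restricted to E.
   Since sum_k v_k(x)^2 <= M^2 on E, the t_k are summable with sum <= M^2 mu(E).
   For V, Cauchy-Schwarz gives (f, v_k)^2 <= |f|^2 t_k: the coordinates of a
   bounded sequence are dominated by a summable sequence, so a diagonal
   (Bolzano-Weierstrass) subsequence converges coordinatewise, and domination
   upgrades this to convergence in l^2.  For V^*, Cauchy-Schwarz in k bounds the
   tail sum_(k>=K) c_k v_k(x) by (sum_(k>=K) c_k^2) M^2 pointwise on E, which gives
   the L^2 convergence of the partial sums, and the splitting
     |V^* c|^2 <= 4 M^2 mu(E) sum_(k<K) c_k^2 + 4 |c|^2 sum_(k>=K) t_k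
   turns coordinatewise convergence of a diagonal subsequence into convergence
   in L^2. *)

From HB Require Import structures.
From mathcomp Require Import all_boot all_order all_algebra.
From mathcomp Require Import all_classical all_reals all_analysis.
From mathcomp Require Import measurable_realfun ring lra.
Set Implicit Arguments. Unset Strict Implicit. Unset Printing Implicit Defensive.
Import Order.TTheory GRing.Theory Num.Theory.
Import numFieldNormedType.Exports.
Local Open Scope classical_set_scope.
Local Open Scope ring_scope.

Section real_inequalities.
Variable R : realFieldType.
Implicit Types a b A B C : R.

Lemma discriminant_le A B C : 0 <= B ->
  (forall l, 0 <= A - 2 * l * C + l ^+ 2 * B) -> C ^+ 2 <= A * B.
Proof.
move=> B0; have [->|Bn0] := eqVneq B 0 => H.
  have [->|Cn0] := eqVneq C 0; first by rewrite expr0n mulr0.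
  have := H ((A + 1) / (2 * C)).
  have -> : A - 2 * ((A + 1) / (2 * C)) * C + ((A + 1) / (2 * C)) ^+ 2 * 0 = -1.
    by field.
  by rewrite lerNr oppr0 ler10.
have Bp : 0 < B by rewrite lt_neqAle eq_sym Bn0.
have := H (C / B).
have -> : A - 2 * (C / B) * C + (C / B) ^+ 2 * B = A - C ^+ 2 / B by field.
by rewrite subr_ge0 ler_pdivrMr.
Qed.

Lemma sqrrD_le a b : (a + b) ^+ 2 <= 2 * a ^+ 2 + 2 * b ^+ 2.
Proof. by have := sqr_ge0 (a - b); nra. Qed.

Lemma sqrrB_le a b : (a - b) ^+ 2 <= 2 * a ^+ 2 + 2 * b ^+ 2.
Proof. by rewrite -[b ^+ 2]sqrrN sqrrD_le. Qed.

Lemma normrM_le_sqrD a b : 2 * `|a * b| <= a ^+ 2 + b ^+ 2.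
Proof.
rewrite normrM -(real_normK (num_real a)) -(real_normK (num_real b)).
by have := sqr_ge0 (`|a| - `|b|); nra.
Qed.

Lemma cauchy_schwarz_sum (m n : nat) (f g : nat -> R) :
  (\sum_(m <= k < n) f k * g k) ^+ 2 <=
  (\sum_(m <= k < n) f k ^+ 2) * (\sum_(m <= k < n) g k ^+ 2).
Proof.
apply: discriminant_le => [|l]; first by apply: sumr_ge0 => k _; exact: sqr_ge0.
have -> : \sum_(m <= k < n) f k ^+ 2 - 2 * l * (\sum_(m <= k < n) f k * g k)
    + l ^+ 2 * (\sum_(m <= k < n) g k ^+ 2) = \sum_(m <= k < n) (f k - l * g k) ^+ 2.
  rewrite !mulr_sumr -sumrN -!big_split /=.
  by apply: eq_bigr => k _; ring.
by apply: sumr_ge0 => k _; exact: sqr_ge0.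
Qed.

Lemma sum_le_head_tail (f : nat -> R) (K : nat) e : (forall k, 0 <= f k) ->
  (forall N, \sum_(K <= k < N) f k <= e) ->
  forall N, \sum_(0 <= k < N) f k <= \sum_(0 <= k < K) f k + e.
Proof.
move=> f0 tail N.
rewrite (@le_trans _ _ (\sum_(0 <= k < maxn N K) f k)) //.
  rewrite (big_cat_nat (leq0n N) (leq_maxl N K)) /= lerDl.
  by apply: sumr_ge0 => k _.
by rewrite (big_cat_nat (leq0n K) (leq_maxr N K)) /= lerD2l.
Qed.

Lemma sum_sqrB_le (f g : nat -> R) (N : nat) X :
  \sum_(0 <= k < N) f k ^+ 2 <= X -> \sum_(0 <= k < N) g k ^+ 2 <= X ->
  \sum_(0 <= k < N) (f k - g k) ^+ 2 <= 4 * X.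
Proof.
move=> fX gX; apply: le_trans (_ : \sum_(0 <= k < N) (2 * f k ^+ 2 + 2 * g k ^+ 2) <= _).
  by apply: ler_sum => k _; exact: sqrrB_le.
rewrite big_split /= -!mulr_sumr (_ : 4 * X = 2 * X + 2 * X); last by ring.
by rewrite lerD // ler_wpM2l.
Qed.

Lemma sum_suffix_le (f : nat -> R) (K m N : nat) : (forall k, 0 <= f k) ->
  (K <= m)%N -> \sum_(m <= k < N) f k <= \sum_(K <= k < N) f k.
Proof.
move=> f0 Km; have [mN|Nm] := leqP m N; last by rewrite big_geq ?(ltnW Nm) ?sumr_ge0.
by rewrite (big_cat_nat Km mN) /= lerDr sumr_ge0.
Qed.

End real_inequalities.

Lemma sqr_le_of_sqrt_le (R : rcfType) (a B : R) : 0 <= a -> Num.sqrt a <= B -> a <= B ^+ 2.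
Proof.
move=> a0 aB; have B0 : 0 <= B := le_trans (sqrtr_ge0 a) aB.
by rewrite -(sqr_sqrtr a0) lerXn2r // ?nnegrE ?sqrtr_ge0.
Qed.

Section real_sequences.
Variable R : realType.

Lemma cvg_sqrt0 (q : R^nat) :
  q @ \oo --> 0 -> (fun n => Num.sqrt (q n)) @ \oo --> 0.
Proof. by move=> q0; rewrite -sqrtr0; apply: continuous_cvg => //; exact: sqrt_continuous. Qed.

Lemma cvg_sqr (u : R^nat) (l : R) :
  u @ \oo --> l -> (fun n => u n ^+ 2) @ \oo --> l ^+ 2.
Proof. by move=> ul; rewrite expr2; under eq_fun do rewrite expr2; exact: cvgM. Qed.

Lemma cvg_le_ub (u : R^nat) (l b : R) :
  u @ \oo --> l -> (forall n, u n <= b) -> l <= b.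
Proof. by move=> ul ub; apply: (ler_cvg_to ul (cvg_cst b)); exact: nearW. Qed.

Lemma cvg_sum_nat (f : nat -> nat -> R) (l : nat -> R) (K : nat) :
  (forall k, (fun n => f n k) @ \oo --> l k) ->
  (fun n => \sum_(0 <= k < K) f n k) @ \oo --> \sum_(0 <= k < K) l k.
Proof. by move=> fl; apply: cvg_big => [|k _]; [exact: add_continuous | exact: fl]. Qed.

Lemma cvg_sum_sqr_sub0 (a : nat -> nat -> R) (y : nat -> R) (K : nat) :
  (forall k, (fun n => a n k) @ \oo --> y k) ->
  (fun n => \sum_(0 <= k < K) (a n k - y k) ^+ 2) @ \oo --> 0.
Proof.
move=> ay; have := cvg_sum_nat (f := fun n k => (a n k - y k) ^+ 2)
  (l := fun k => (y k - y k) ^+ 2) (K := K).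
rewrite [X in _ --> X]big1 => [|k _]; last by rewrite subrr expr0n.
by apply=> k; apply: cvg_sqr; apply: cvgB => //; exact: cvg_cst.
Qed.

Lemma summable_tail_le (a : nat -> R) (S : R) : (forall k, 0 <= a k) ->
  (forall N, \sum_(0 <= k < N) a k <= S) ->
  forall e, 0 < e -> exists K, forall N, \sum_(K <= k < N) a k <= e.
Proof.
move=> a0 aS e e0.
have nd : nondecreasing_seq (series a).
  by apply/nondecreasing_seqP => n; rewrite /series /= big_nat_recr //= lerDl.
have cv : cvgn (series a).
  by apply: nondecreasing_is_cvgn nd _; exists S => _ [n _ <-]; exact: aS.
have [K _ HK] := (cvgrPdist_le _ _).1 cv e e0.
exists K => N; have [KN|NK] := leqP K N; last by rewrite big_geq ?(ltW e0) // ltnW.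
have := nondecreasing_cvgn_le nd cv N.
rewrite /series /= (big_cat_nat (leq0n K) KN) /= -lerBrDl => /le_trans; apply.
by have /ler_normlP[] := HK K (leqnn K).
Qed.

Lemma cvg0_of_approx (q : R^nat) (h : nat -> R^nat) (C : R) : 0 <= C ->
  (forall n, 0 <= q n) -> (forall K, h K @ \oo --> 0) ->
  (forall e, 0 < e -> exists K, \forall n \near \oo, q n <= h K n + C * e) ->
  q @ \oo --> 0.
Proof.
move=> C0 q0 h0 approx; apply/cvgrPdist_le => e e0.
have C1 : 0 < C + 1 by rewrite ltr_wpDl.
have e20 : 0 < e / 2 by rewrite divr_gt0.
have [K HK] := approx (e / 2 / (C + 1)) (divr_gt0 e20 C1).
have Ce : C * (e / 2 / (C + 1)) <= e / 2.
  have -> : C * (e / 2 / (C + 1)) = e / 2 * (C / (C + 1)).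
    by field; rewrite lt0r_neq0.
  by apply: ler_piMr; [exact: ltW | rewrite ler_pdivrMr // mul1r lerDl].
move/cvgrPdist_le : (h0 K) => /(_ _ e20) hK.
near=> n; rewrite sub0r normrN ger0_norm //.
apply: le_trans (_ : h K n + C * (e / 2 / (C + 1)) <= _); first by near: n.
rewrite [leRHS]splitr lerD //.
have : `|0 - h K n| <= e / 2 by near: n.
by rewrite sub0r normrN => /(le_trans (ler_norm _)).
Unshelve. all: by end_near. Qed.

End real_sequences.

Lemma increasing_seq_ge (f : nat -> nat) : increasing_seq f -> forall n, (n <= f n)%N.
Proof. by move=> /increasing_seqP finc; elim=> // n IH; exact: leq_ltn_trans IH (finc n). Qed.

Lemma cvg_through_subseq {T : topologicalType} (u : nat -> T) (l : T)
    (s phi : nat -> nat) (N : nat) :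
  increasing_seq s -> (forall n, (n <= phi n)%N) ->
  (forall n, (N <= n)%N -> exists m, phi n = s m) ->
  u \o s @ \oo --> l -> u \o phi @ \oo --> l.
Proof.
move=> s_inc phi_ge phi_s us A /us [M _ HM].
exists (maxn N (s M)) => // n /=; rewrite geq_max => /andP[Nn sMn].
have [m phim] := phi_s n Nn; rewrite phim; apply: HM => /=.
by rewrite -s_inc -phim; exact: leq_trans sMn (phi_ge n).
Qed.

Lemma diagonal_extraction {T : ptopologicalType} (a : nat -> nat -> T) :
  (forall k (s : nat -> nat),
     exists2 r : nat -> nat, increasing_seq r & cvgn (fun n => a (s (r n)) k)) ->
  exists2 phi : nat -> nat, increasing_seq phi & forall k, cvgn (fun n => a (phi n) k).
Proof.
move=> extract.
have /choice[sel hsel] : forall ks : nat * (nat -> nat), exists r : nat -> nat,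
    increasing_seq r /\ cvgn (fun n => a (ks.2 (r n)) ks.1).
  by move=> [k s]; have [r ? ?] := extract k s; exists r.
(* [sub j] is the j-th nested subsequence; from index j on, the diagonal
   [n |-> sub n n] stays in the range of [sub j]. *)
pose fix sub j : nat -> nat := if j is i.+1 then sub i \o sel (i, sub i) else id.
have sub_inc j : increasing_seq (sub j).
  by elim: j => [//|j IH] m n /=; rewrite IH; exact: (hsel _).1.
have sub_range j i x : exists m, sub (i + j)%N x = sub j m.
  elim: i x => [|i IH] x; first by exists x.
  by rewrite addSn /=; exact: IH.
exists (fun n => sub n n).
  apply/increasing_seqP => n /=; rewrite (leW_mono (sub_inc n)).
  exact: increasing_seq_ge (hsel _).1 n.+1.
move=> k; have /cvg_ex[l hl] := (hsel (k, sub k)).2.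
apply/cvg_ex; exists l.
apply: (@cvg_through_subseq _ (a^~ k) l (sub k.+1) (fun n => sub n n) k.+1) hl
  => [//|n|n kn].
  exact: increasing_seq_ge.
by rewrite -(subnK kn); exact: sub_range.
Qed.

Lemma bounded_diagonal_extraction (R : realType) (a : nat -> nat -> R) (C : nat -> R) :
  (forall n k, `|a n k| <= C k) ->
  exists2 phi : nat -> nat, increasing_seq phi & forall k, cvgn (fun n => a (phi n) k).
Proof.
move=> aC; apply: diagonal_extraction => k s.
apply: (@bolzano_weierstrass _ (fun n => a (s n) k)).
rewrite /bounded_near; near=> B => n _; apply: le_trans (aC _ k) _.
by near: B; apply: nbhs_pinfty_ge; exact: num_real.
Unshelve. all: by end_near. Qed.

Lemma increasing_seq_homo_ltn (f : nat -> nat) :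
  increasing_seq f -> {homo f : m n / (m < n)%N >-> (m < n)%N}.
Proof. by move=> finc; exact: mono2W (leW_mono finc). Qed.

Section ell2.
Variable R : realType.
Implicit Types (c : nat -> R) (X : R).

Lemma sum_sqr_le_nneseries c X : (\sum_(k <oo) ((c k) ^+ 2)%:E <= X%:E)%E ->
  forall N, \sum_(0 <= k < N) c k ^+ 2 <= X.
Proof.
move=> cX N; rewrite -lee_fin -sumEFin (le_trans _ cX) //.
exact: (@nneseries_lim_ge R (fun k => ((c k) ^+ 2)%:E) xpredT 0 N (fun k _ _ => sqr_ge0 (c k))).
Qed.

Lemma ell2_partial_le c : ell2 c ->
  forall N, \sum_(0 <= k < N) c k ^+ 2 <= fine (\sum_(k <oo) ((c k) ^+ 2)%:E)%E.
Proof.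
move=> c2; apply: sum_sqr_le_nneseries; rewrite fineK // ge0_fin_numE //.
by apply: nneseries_ge0 => k _; rewrite lee_fin sqr_ge0.
Qed.

Lemma ell2_le c X : (forall N, \sum_(0 <= k < N) c k ^+ 2 <= X) ->
  ell2 c /\ fine (\sum_(k <oo) ((c k) ^+ 2)%:E)%E <= X.
Proof.
move=> cX.
have le : (\sum_(k <oo) ((c k) ^+ 2)%:E <= X%:E)%E.
  apply: lime_le; first by apply: is_cvg_ereal_nneg_natsum => k _; rewrite lee_fin sqr_ge0.
  by apply: nearW => N; rewrite sumEFin lee_fin.
have lt : (\sum_(k <oo) ((c k) ^+ 2)%:E < +oo)%E by apply: le_lt_trans le _; exact: ltry.
split => //; rewrite -lee_fin fineK // ge0_fin_numE // nneseries_ge0 // => k _.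
by rewrite lee_fin sqr_ge0.
Qed.

Lemma ell2norm_sqr_le c B : ell2 c -> ell2norm c <= B ->
  forall N, \sum_(0 <= k < N) c k ^+ 2 <= B ^+ 2.
Proof.
move=> c2 cB N; apply: le_trans (ell2_partial_le c2 N) (sqr_le_of_sqrt_le _ cB).
by apply: fine_ge0; apply: nneseries_ge0 => k _; rewrite lee_fin sqr_ge0.
Qed.

Lemma ell2_dominated_cvg (a : nat -> nat -> R) (y t : nat -> R) (S : R) :
  (forall N, \sum_(0 <= k < N) t k <= S) -> (forall n k, a n k ^+ 2 <= t k) ->
  (forall k, (fun n => a n k) @ \oo --> y k) ->
  ell2 y /\ (fun n => ell2norm (a n - y)) @ \oo --> 0.
Proof.
move=> tS a_t ay.
have t0 k : 0 <= t k := le_trans (sqr_ge0 _) (a_t 0%N k).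
have yt k : y k ^+ 2 <= t k.
  exact: cvg_le_ub (cvg_sqr (ay k)) (a_t ^~ k).
have dt n k : (a n k - y k) ^+ 2 <= 4 * t k.
  by apply: le_trans (sqrrB_le _ _) _; have := a_t n k; have := yt k; lra.
split.
  suff yS N : \sum_(0 <= k < N) y k ^+ 2 <= S by exact: (ell2_le yS).1.
  by apply: le_trans (tS N); apply: ler_sum => k _.
apply: cvg_sqrt0.
apply: (@cvg0_of_approx _ _ (fun K n => \sum_(0 <= k < K) (a n k - y k) ^+ 2) 4) => //.
- by move=> n; apply: fine_ge0; apply: nneseries_ge0 => k _; rewrite lee_fin sqr_ge0.
- by move=> K; exact: cvg_sum_sqr_sub0.
move=> e e0; have [K HK] := summable_tail_le t0 tS e0.
exists K; apply: nearW => n; apply: (ell2_le (sum_le_head_tail _ _)).2 => [k|N].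
  exact: sqr_ge0.
apply: le_trans (_ : \sum_(K <= k < N) 4 * t k <= _); first by apply: ler_sum => k _; exact: dt.
by rewrite -mulr_sumr ler_wpM2l.
Qed.

Lemma ell2_bounded_subseq (u : nat -> nat -> R) (B : R) :
  (forall n N, \sum_(0 <= k < N) u n k ^+ 2 <= B ^+ 2) ->
  exists2 phi : nat -> nat, increasing_seq phi & exists2 y : nat -> R,
    (forall N, \sum_(0 <= k < N) y k ^+ 2 <= B ^+ 2) &
    forall k, (fun n => u (phi n) k) @ \oo --> y k.
Proof.
move=> uB; have uC n k : `|u n k| <= `|B|.
  rewrite -!sqrtr_sqr ler_wsqrtr // (le_trans _ (uB n k.+1)) //.
  have := @sum_suffix_le _ (fun i => u n i ^+ 2) 0 k k.+1 (fun i => sqr_ge0 _) (leq0n k).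
  by rewrite big_nat1.
have [phi phi_inc cv] := bounded_diagonal_extraction uC.
exists phi => //; exists (fun k => limn (fun n => u (phi n) k)) => // N.
by apply: (cvg_le_ub (cvg_sum_nat (fun k => cvg_sqr (cv k)))) => n; exact: uB.
Qed.

End ell2.

Section L2_facts.
Context d (T : measurableType d) (R : realType) (mu : {measure set T -> \bar R}).
Local Notation integrableT f := (mu.-integrable setT (EFin \o f)).
Local Notation Rint := (Rintegral mu setT).
Implicit Types (f g h : T -> R) (a c : R).

Lemma integrable_dominated g h : measurable_fun setT g -> integrableT h ->
  (forall x, `|g x| <= h x) -> integrableT g.
Proof.
move=> mg ih gh; apply: le_integrable ih => //; first exact/measurable_EFinP.
by move=> x _ /=; rewrite lee_fin (le_trans (gh x)) // ler_norm.
Qed.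

Lemma integrable_ge0 g : measurable_fun setT g -> (forall x, 0 <= g x) ->
  (\int[mu]_x (g x)%:E < +oo)%E -> integrableT g.
Proof.
move=> mg g0 fin; apply/integrableP; split; first exact/measurable_EFinP.
by under eq_integral do rewrite /= ger0_norm ?g0 //.
Qed.

Lemma integralEFin g : integrableT g -> (\int[mu]_x (g x)%:E)%E = (Rint g)%:E.
Proof. by move=> ig; rewrite /Rintegral fineK //; exact: integrable_fin_num ig. Qed.

Lemma integrableZ a f : integrableT f -> integrableT (fun x => a * f x).
Proof.
by move=> If; apply: (eq_integrable _ _ _ _ (integrableZl _ a If)) => // x _ /=; rewrite EFinM.
Qed.

Lemma integrableZD a f g : integrableT f -> integrableT g ->
  integrableT (fun x => a * f x + g x).
Proof.
by move=> If Ig; apply: (eq_integrable _ _ _ _ (integrableD _ (integrableZ a If) Ig)).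
Qed.

Lemma RintegralZD a f g : integrableT f -> integrableT g ->
  Rint (fun x => a * f x + g x) = a * Rint f + Rint g.
Proof.
by move=> If Ig; rewrite RintegralD ?RintegralZl //; exact: integrableZ.
Qed.

Lemma integrable_big (I : Type) (s : seq I) (F : I -> T -> R) :
  (forall i, integrableT (F i)) -> integrableT (fun x => \sum_(i <- s) F i x).
Proof.
move=> IF; elim: s => [|i s IH].
  by under eq_fun do rewrite big_nil; exact: integrable0.
under eq_fun do rewrite big_cons.
by apply: (eq_integrable _ _ _ _ (integrableZD 1 (IF i) IH)) => // x _ /=; rewrite mul1r.
Qed.

Lemma Rintegral_big (I : Type) (s : seq I) (F : I -> T -> R) :
  (forall i, integrableT (F i)) ->
  Rint (fun x => \sum_(i <- s) F i x) = \sum_(i <- s) Rint (F i).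
Proof.
move=> IF; elim: s => [|i s IH].
  by under eq_Rintegral do rewrite big_nil; rewrite big_nil /Rintegral integral0.
under eq_Rintegral do rewrite big_cons.
by rewrite RintegralD ?big_cons ?IH //; exact: integrable_big.
Qed.

Lemma integrable_indic_fin E : measurable E -> (mu E < +oo)%E -> integrableT (\1_E).
Proof.
move=> mE fE; apply: integrable_ge0 => [|x|].
- exact: measurable_indic.
- by rewrite indicE.
- by rewrite integral_indic // setIT.
Qed.

Lemma RintegralZ_indic E c : measurable E -> (mu E < +oo)%E ->
  Rint (fun x => c * \1_E x) = c * fine (mu E).
Proof.
move=> mE fE; rewrite RintegralZl ?integrable_indic_fin //.
by rewrite /Rintegral integral_indic // setIT.
Qed.

Lemma L2_sqr_integrable f : L2 mu f -> integrableT (fun x => f x ^+ 2).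
Proof.
move=> [mf fin]; apply: integrable_ge0 => //; first exact: measurable_funX.
by move=> x; exact: sqr_ge0.
Qed.

Lemma sqL2E f : L2 mu f -> sqL2 mu f = (Rint (fun x => f x ^+ 2))%:E.
Proof. by move=> f2; rewrite /sqL2 -integralEFin //; exact: L2_sqr_integrable. Qed.

Lemma L2normE f : L2 mu f -> L2norm mu f = Num.sqrt (Rint (fun x => f x ^+ 2)).
Proof. by move=> f2; rewrite /L2norm sqL2E. Qed.

Lemma L2_dominated E g c : measurable E -> (mu E < +oo)%E ->
  measurable_fun setT g -> (forall x, g x ^+ 2 <= c * \1_E x) ->
  L2 mu g /\ Rint (fun x => g x ^+ 2) <= c * fine (mu E).
Proof.
move=> mE fE mg gc; have ic := integrableZ c (integrable_indic_fin mE fE).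
have ig : integrableT (fun x => g x ^+ 2).
  apply: (integrable_dominated _ ic); first exact: measurable_funX.
  by move=> x; rewrite ger0_norm ?sqr_ge0.
split; first by split => //; rewrite /sqL2 integralEFin // ltry.
by rewrite -RintegralZ_indic //; apply: le_Rintegral.
Qed.

Lemma L2_mul_integrable f g : L2 mu f -> L2 mu g -> integrableT (fun x => f x * g x).
Proof.
move=> f2 g2; apply: (integrable_dominated _ (integrableZD 1 (L2_sqr_integrable f2)
  (L2_sqr_integrable g2))) => [|x].
  by apply: measurable_funM; [case: f2 | case: g2].
by have := normrM_le_sqrD (f x) (g x); have := normr_ge0 (f x * g x); lra.
Qed.

Lemma Rintegral_sqr_le f B : L2 mu f -> L2norm mu f <= B ->
  Rint (fun x => f x ^+ 2) <= B ^+ 2.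
Proof.
move=> f2; rewrite L2normE //; apply: sqr_le_of_sqrt_le.
by apply: Rintegral_ge0 => x _; exact: sqr_ge0.
Qed.

Lemma cauchy_schwarz_Rintegral f g : L2 mu f -> L2 mu g ->
  Rint (fun x => f x * g x) ^+ 2 <=
  Rint (fun x => f x ^+ 2) * Rint (fun x => g x ^+ 2).
Proof.
move=> f2 g2; apply: discriminant_le => [|l].
  by apply: Rintegral_ge0 => x _; exact: sqr_ge0.
have If := L2_sqr_integrable f2; have Ig := L2_sqr_integrable g2.
have Ifg := L2_mul_integrable f2 g2.
have -> : Rint (fun x => f x ^+ 2) - 2 * l * Rint (fun x => f x * g x)
    + l ^+ 2 * Rint (fun x => g x ^+ 2) =
    Rint (fun x => l ^+ 2 * g x ^+ 2 + (- 2 * l * (f x * g x) + f x ^+ 2)).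
  by rewrite RintegralZD ?integrableZD // RintegralZD //; ring.
apply: Rintegral_ge0 => x _.
by rewrite (_ : _ + _ = (f x - l * g x) ^+ 2) ?sqr_ge0 //; ring.
Qed.

End L2_facts.

Section square_summable_family.
Context d (T : measurableType d) (R : realType) (mu : {measure set T -> \bar R}).
Variables (E : set T) (v : nat -> T -> R) (M : R).
Hypothesis mE : measurable E.
Hypothesis E_fin : (mu E < +oo)%E.
Hypothesis v_L2 : forall k, L2 mu (v k).
Hypothesis v_bnd : forall x, E x -> (\sum_(k <oo) ((v k x) ^+ 2)%:E <= (M ^+ 2)%:E)%E.
Local Notation integrableT f := (mu.-integrable setT (EFin \o f)).
Local Notation Rint := (Rintegral mu setT).

Definition vE k x : R := \1_E x * v k x.
Definition vE_sqnorm k : R := Rint (fun x => vE k x ^+ 2).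

Lemma indic_cases x : (E x /\ \1_E x = 1 :> R) \/ (~ E x /\ \1_E x = 0 :> R).
Proof.
have [Ex|nEx] := pselect (E x); [left | right].
  by rewrite indicE mem_set.
by rewrite indicE memNset.
Qed.

Lemma sum_v_sqr_le x m N : E x -> \sum_(m <= k < N) v k x ^+ 2 <= M ^+ 2.
Proof.
move=> Ex; apply: le_trans (sum_suffix_le _ _ (leq0n m)) (sum_sqr_le_nneseries (v_bnd Ex) N).
by move=> k; exact: sqr_ge0.
Qed.

Lemma measurable_v k : measurable_fun setT (v k).
Proof. by case: (v_L2 k). Qed.

Lemma vE_sqr_le k x : vE k x ^+ 2 <= M ^+ 2 * \1_E x.
Proof.
rewrite /vE; case: (indic_cases x) => -[Ex ->]; last by rewrite !mul0r expr0n mulr0.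
by rewrite mul1r mulr1; have := sum_v_sqr_le k k.+1 Ex; rewrite big_nat1.
Qed.

Lemma vE_L2 k : L2 mu (vE k).
Proof.
apply: (L2_dominated mE E_fin _ (vE_sqr_le k)).1.
by apply: measurable_funM; [exact: measurable_indic | exact: measurable_v].
Qed.

Lemma vE_sqnorm_ge0 k : 0 <= vE_sqnorm k.
Proof. by apply: Rintegral_ge0 => x _; exact: sqr_ge0. Qed.

Lemma sum_vE_sqnorm_le N : \sum_(0 <= k < N) vE_sqnorm k <= M ^+ 2 * fine (mu E).
Proof.
rewrite /vE_sqnorm -Rintegral_big; last by move=> k; exact: L2_sqr_integrable (vE_L2 k).
rewrite -RintegralZ_indic //; apply: le_Rintegral => //.
- by apply: integrable_big => k; exact: L2_sqr_integrable (vE_L2 k).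
- exact: integrableZ (integrable_indic_fin mE E_fin).
move=> x _; case: (indic_cases x) => -[Ex E1]; rewrite E1; last first.
  by rewrite mulr0 big1 // => k _; rewrite /vE E1 mul0r expr0n.
by under eq_bigr do rewrite /vE E1 mul1r; rewrite mulr1 sum_v_sqr_le.
Qed.

Lemma Vop_vE f k : (forall x, ~ E x -> f x = 0) ->
  Vop mu v f k = Rint (fun x => f x * vE k x).
Proof.
move=> f0; change (Rint (fun x => f x * v k x) = Rint (fun x => f x * vE k x)).
apply: eq_Rintegral => x _; rewrite /vE.
by case: (indic_cases x) => -[Ex ->]; rewrite ?mul1r // f0 // !mul0r.
Qed.

Lemma Vop_sqr_le f k : L2on mu E f ->
  Vop mu v f k ^+ 2 <= Rint (fun x => f x ^+ 2) * vE_sqnorm k.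
Proof.
by move=> [f2 f0]; rewrite Vop_vE //; exact: cauchy_schwarz_Rintegral (vE_L2 k).
Qed.

Lemma Vop_ell2 f : L2on mu E f -> ell2 (Vop mu v f).
Proof.
move=> fE.
suff fX N : \sum_(0 <= k < N) Vop mu v f k ^+ 2 <=
    Rint (fun x => f x ^+ 2) * (M ^+ 2 * fine (mu E)) by exact: (ell2_le fX).1.
apply: le_trans (_ : \sum_(0 <= k < N) Rint (fun x => f x ^+ 2) * vE_sqnorm k <= _).
  by apply: ler_sum => k _; exact: Vop_sqr_le.
rewrite -mulr_sumr ler_wpM2l ?sum_vE_sqnorm_le //.
by apply: Rintegral_ge0 => x _; exact: sqr_ge0.
Qed.

Lemma Vop_linear a f g : L2on mu E f -> L2on mu E g ->
  Vop mu v (a *: f + g) = a *: Vop mu v f + Vop mu v g.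
Proof.
move=> [f2 f0] [g2 g0]; apply/funext => k.
change (Vop mu v (fun x => a * f x + g x) k = a * Vop mu v f k + Vop mu v g k).
rewrite !Vop_vE // => [|x nEx]; last by rewrite f0 // g0 // mulr0 addr0.
rewrite -RintegralZD; try exact: L2_mul_integrable (vE_L2 k).
by apply: eq_Rintegral => x _; rewrite mulrDl mulrA.
Qed.

Lemma Vop_compact :
  compact_operator (L2on mu E) (L2norm mu) ell2 ell2norm (Vop mu v).
Proof.
split => [f|a f g|u uE [B uB]]; [exact: Vop_ell2 | exact: Vop_linear |].
have uB2 n k : Vop mu v (u n) k ^+ 2 <= B ^+ 2 * vE_sqnorm k.
  apply: le_trans (Vop_sqr_le k (uE n)) _; apply: ler_wpM2r; first exact: vE_sqnorm_ge0.
  exact: Rintegral_sqr_le (uE n).1 (uB n).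
have uC n k : `|Vop mu v (u n) k| <= Num.sqrt (B ^+ 2 * vE_sqnorm k).
  by rewrite -sqrtr_sqr ler_wsqrtr.
have [phi phi_inc cv] := bounded_diagonal_extraction uC.
pose y k := limn (fun n => Vop mu v (u (phi n)) k).
have tS N : \sum_(0 <= k < N) B ^+ 2 * vE_sqnorm k <= B ^+ 2 * (M ^+ 2 * fine (mu E)).
  by rewrite -mulr_sumr ler_wpM2l ?sqr_ge0 ?sum_vE_sqnorm_le.
have [y2 cvy] := @ell2_dominated_cvg R (fun n => Vop mu v (u (phi n))) y _ _ tS
  (fun n => uB2 (phi n)) cv.
exists phi, y; split => //; exact: increasing_seq_homo_ltn.
Qed.

Lemma VpartialE c N x :
  Vpartial E v c N x = \1_E x * \sum_(0 <= k < N) c k * v k x.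
Proof. by rewrite /Vpartial big_mkord. Qed.

Lemma VstarE c x :
  Vstar E v c x = \1_E x * limn (fun N => \sum_(0 <= k < N) c k * v k x).
Proof.
by rewrite /Vstar; congr (_ * _); congr (limn _); apply/funext => N; rewrite big_mkord.
Qed.

Lemma sum_mul_v_sqr_le c x m N : E x ->
  (\sum_(m <= k < N) c k * v k x) ^+ 2 <= (\sum_(m <= k < N) c k ^+ 2) * M ^+ 2.
Proof.
move=> Ex; apply: le_trans (cauchy_schwarz_sum _ _ _ _) _.
by rewrite ler_wpM2l ?sum_v_sqr_le ?sumr_ge0 // => k _; exact: sqr_ge0.
Qed.

Lemma series_mul_v_cvg c x : ell2 c -> E x ->
  cvgn (fun N => \sum_(0 <= k < N) c k * v k x).
Proof.
move=> c2 Ex; apply: (@normed_cvg _ _ (fun k => c k * v k x)).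
apply: nondecreasing_is_cvgn.
  apply/nondecreasing_seqP => n.
  by rewrite /normed_series_of /series /= big_nat_recr //= lerDl.
exists ((fine (\sum_(k <oo) ((c k) ^+ 2)%:E)%E + M ^+ 2) / 2) => _ [n _ <-] /=.
rewrite ler_pdivlMr // mulrC mulr_sumr.
apply: le_trans (_ : \sum_(0 <= k < n) (c k ^+ 2 + v k x ^+ 2) <= _).
  by apply: ler_sum => k _; exact: normrM_le_sqrD.
by rewrite big_split lerD ?ell2_partial_le ?sum_v_sqr_le.
Qed.

Lemma Vpartial_cvg c x : ell2 c ->
  (fun N => Vpartial E v c N x) @ \oo --> Vstar E v c x.
Proof.
move=> c2; rewrite VstarE
  (_ : (fun N => _) = fun N => \1_E x * \sum_(0 <= k < N) c k * v k x).
  case: (indic_cases x) => -[Ex E1].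
    by apply: cvgM; [exact: cvg_cst | exact: series_mul_v_cvg].
  rewrite E1 mul0r (_ : (fun N => _) = fun=> 0); first exact: cvg_cst.
  by apply/funext => N; exact: mul0r.
by apply/funext => N; exact: VpartialE.
Qed.

Lemma measurable_Vpartial c N : measurable_fun setT (Vpartial E v c N).
Proof.
apply: measurable_funM; first exact: measurable_indic.
by apply: measurable_sum => k; apply: measurable_funM => //; exact: measurable_v.
Qed.

Lemma measurable_Vstar c : ell2 c -> measurable_fun setT (Vstar E v c).
Proof.
move=> c2; apply: (measurable_fun_cvg (h := Vpartial E v c)) => [m|x _].
  exact: measurable_Vpartial.
exact: Vpartial_cvg.
Qed.

Lemma Vpartial_sub_Vstar_sqr_le c N e x : ell2 c ->
  (forall N', \sum_(N <= k < N') c k ^+ 2 <= e) ->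
  (Vpartial E v c N x - Vstar E v c x) ^+ 2 <= e * M ^+ 2 * \1_E x.
Proof.
move=> c2 tail; rewrite VpartialE VstarE.
case: (indic_cases x) => -[Ex ->]; last by rewrite !mul0r subrr expr0n mulr0.
rewrite !mul1r mulr1 -sqrrN opprB.
have cvP := series_mul_v_cvg c2 Ex.
apply: (ler_cvg_to (cvg_sqr (cvgB cvP (cvg_cst (\sum_(0 <= k < N) c k * v k x))))
  (cvg_cst _)).
near=> N'; have NN' : (N <= N')%N by near: N'; exists N.
rewrite !fctE (big_cat_nat (leq0n N) NN') /= addrAC subrr add0r.
by apply: le_trans (sum_mul_v_sqr_le _ _ _ Ex) _; rewrite ler_wpM2r ?sqr_ge0.
Unshelve. all: by end_near. Qed.

Lemma measurable_Vpartial_sub_Vstar c N : ell2 c ->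
  measurable_fun setT (Vpartial E v c N - Vstar E v c).
Proof.
by move=> c2; apply: measurable_funB; [exact: measurable_Vpartial | exact: measurable_Vstar].
Qed.

Lemma Vpartial_sub_Vstar_L2 c N : ell2 c -> L2 mu (Vpartial E v c N - Vstar E v c).
Proof.
move=> c2; have tail N' : \sum_(N <= k < N') c k ^+ 2 <= fine (\sum_(k <oo) (c k ^+ 2)%:E)%E.
  apply: le_trans (ell2_partial_le c2 N').
  by apply: (@sum_suffix_le _ (fun k => c k ^+ 2)) => // k; exact: sqr_ge0.
exact: (L2_dominated mE E_fin (measurable_Vpartial_sub_Vstar N c2)
  (fun x => Vpartial_sub_Vstar_sqr_le x c2 tail)).1.
Qed.

Lemma Rintegral_Vpartial_sub_Vstar_cvg0 c : ell2 c ->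
  (fun N => Rint (fun x => (Vpartial E v c N x - Vstar E v c x) ^+ 2)) @ \oo --> 0.
Proof.
move=> c2; apply: (@cvg0_of_approx _ _ (fun _ _ => 0) (M ^+ 2 * fine (mu E))).
- by rewrite mulr_ge0 ?sqr_ge0 ?fine_ge0.
- by move=> N; apply: Rintegral_ge0 => x _; exact: sqr_ge0.
- by move=> _; exact: cvg_cst.
move=> e e0; have [K HK] := summable_tail_le (fun k => sqr_ge0 (c k)) (ell2_partial_le c2) e0.
exists K; near=> N; have KN : (K <= N)%N by near: N; exists K.
have tail N' : \sum_(N <= k < N') c k ^+ 2 <= e.
  apply: le_trans (HK N').
  by apply: (@sum_suffix_le _ (fun k => c k ^+ 2)) => // k; exact: sqr_ge0.
rewrite add0r [_ * e]mulrC mulrA.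
exact: (L2_dominated mE E_fin (measurable_Vpartial_sub_Vstar N c2)
  (fun x => Vpartial_sub_Vstar_sqr_le x c2 tail)).2.
Unshelve. all: by end_near. Qed.

Lemma Vpartial_cvg_L2 c : ell2 c ->
  (fun N => L2norm mu (Vpartial E v c N - Vstar E v c)) @ \oo --> 0.
Proof.
move=> c2; rewrite (_ : (fun N => _) =
    fun N => Num.sqrt (Rint (fun x => (Vpartial E v c N x - Vstar E v c x) ^+ 2))).
  exact: cvg_sqrt0 (Rintegral_Vpartial_sub_Vstar_cvg0 c2).
by apply/funext => N; rewrite L2normE //; exact: Vpartial_sub_Vstar_L2.
Qed.

Lemma Vstar_sqr_le c x : ell2 c ->
  Vstar E v c x ^+ 2 <= fine (\sum_(k <oo) ((c k) ^+ 2)%:E)%E * M ^+ 2 * \1_E x.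
Proof.
move=> c2; have := Vpartial_sub_Vstar_sqr_le x c2 (N := 0) (ell2_partial_le c2).
by rewrite /Vpartial big_ord0 mulr0 sub0r sqrrN.
Qed.

Lemma Vstar_L2on c : ell2 c -> L2on mu E (Vstar E v c).
Proof.
move=> c2; split; first exact: (L2_dominated mE E_fin (measurable_Vstar c2)
  (fun x => Vstar_sqr_le x c2)).1.
by move=> x nEx; rewrite /Vstar indicE memNset // mul0r.
Qed.

Lemma Vstar_linear a c c' : ell2 c -> ell2 c' ->
  Vstar E v (a *: c + c') = a *: Vstar E v c + Vstar E v c'.
Proof.
move=> c2 c'2; apply/funext => x.
change (Vstar E v (fun k => a * c k + c' k) x = a * Vstar E v c x + Vstar E v c' x).
rewrite !VstarE; case: (indic_cases x) => -[Ex ->]; last by rewrite !mul0r mulr0 addr0.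
rewrite !mul1r (_ : (fun N => _) = fun N =>
    a * \sum_(0 <= k < N) c k * v k x + \sum_(0 <= k < N) c' k * v k x).
  apply: cvg_lim => //; apply: cvgD; last exact: series_mul_v_cvg.
  by apply: cvgM; [exact: cvg_cst | exact: series_mul_v_cvg].
apply/funext => N; rewrite mulr_sumr -big_split /=.
by apply: eq_bigr => k _; rewrite mulrDl mulrA.
Qed.

Lemma Vpartial_sqr_le c X K N x : (K <= N)%N ->
  (forall N, \sum_(0 <= k < N) c k ^+ 2 <= X) ->
  Vpartial E v c N x ^+ 2 <= 2 * X * \sum_(K <= k < N) vE k x ^+ 2 +
    2 * (\sum_(0 <= k < K) c k ^+ 2) * M ^+ 2 * \1_E x.
Proof.
move=> KN cX; rewrite VpartialE; case: (indic_cases x) => -[Ex E1]; rewrite E1; last first.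
  by rewrite !mul0r expr0n mulr0 addr0 big1 ?mulr0 // => k _; rewrite /vE E1 mul0r expr0n.
have -> : \sum_(K <= k < N) vE k x ^+ 2 = \sum_(K <= k < N) v k x ^+ 2.
  by apply: eq_bigr => k _; rewrite /vE E1 mul1r.
rewrite mul1r mulr1 (big_cat_nat (leq0n K) KN) /= addrC.
apply: le_trans (sqrrD_le _ _) _; rewrite -!mulrA; apply: lerD; rewrite ler_wpM2l //.
  apply: le_trans (cauchy_schwarz_sum _ _ _ _) _; apply: ler_wpM2r.
    by apply: sumr_ge0 => k _; exact: sqr_ge0.
  apply: le_trans (cX N); apply: (@sum_suffix_le _ (fun k => c k ^+ 2)) => // k.
  exact: sqr_ge0.
exact: sum_mul_v_sqr_le.
Qed.

Lemma Rintegral_Vpartial_sqr_le c X K N : (K <= N)%N ->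
  (forall N, \sum_(0 <= k < N) c k ^+ 2 <= X) ->
  Rint (fun x => Vpartial E v c N x ^+ 2) <= 2 * X * \sum_(K <= k < N) vE_sqnorm k +
    2 * (\sum_(0 <= k < K) c k ^+ 2) * M ^+ 2 * fine (mu E).
Proof.
move=> KN cX; have vE2 k := L2_sqr_integrable (vE_L2 k).
have IS := integrable_big (index_iota K N) vE2.
have IE := integrableZ (2 * (\sum_(0 <= k < K) c k ^+ 2) * M ^+ 2)
  (integrable_indic_fin mE E_fin).
have IG := integrableZD (2 * X) IS IE.
rewrite /vE_sqnorm -Rintegral_big // -RintegralZ_indic // -RintegralZD //.
apply: le_Rintegral => // [|x _]; last exact: Vpartial_sqr_le.
apply: (integrable_dominated _ IG) => [|x].
  exact/measurable_funX/measurable_Vpartial.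
by rewrite ger0_norm ?sqr_ge0 // Vpartial_sqr_le.
Qed.

Lemma Rintegral_Vstar_sqr_le_Vpartial c N : ell2 c ->
  Rint (fun x => Vstar E v c x ^+ 2) <= 2 * Rint (fun x => Vpartial E v c N x ^+ 2) +
    2 * Rint (fun x => (Vpartial E v c N x - Vstar E v c x) ^+ 2).
Proof.
move=> c2; have D2 : integrableT (fun x => (Vpartial E v c N x - Vstar E v c x) ^+ 2).
  exact: L2_sqr_integrable (Vpartial_sub_Vstar_L2 N c2).
have V2 := L2_sqr_integrable (Vstar_L2on c2).1.
have P2 : integrableT (fun x => Vpartial E v c N x ^+ 2).
  apply: (integrable_dominated _ (integrableZD 2 V2 (integrableZ 2 D2))) => [|x].
    exact/measurable_funX/measurable_Vpartial.
  rewrite ger0_norm ?sqr_ge0 //.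
  by rewrite -{1}(subrK (Vstar E v c x) (Vpartial E v c N x)) addrC sqrrD_le.
apply: (@le_trans _ _ (Rint (fun x => 2 * Vpartial E v c N x ^+ 2 +
    2 * (Vpartial E v c N x - Vstar E v c x) ^+ 2))).
  apply: le_Rintegral => // [|x _]; first exact: integrableZD (integrableZ 2 D2).
  rewrite {1}(_ : Vstar E v c x = Vpartial E v c N x - (Vpartial E v c N x - Vstar E v c x)).
    exact: sqrrB_le.
  by rewrite opprB addrC subrK.
rewrite RintegralZD //; last exact: integrableZ.
by rewrite RintegralZl.
Qed.

Lemma Rintegral_Vstar_sqr_le c X K e :
  (forall N, \sum_(0 <= k < N) c k ^+ 2 <= X) ->
  (forall N, \sum_(K <= k < N) vE_sqnorm k <= e) ->
  Rint (fun x => Vstar E v c x ^+ 2) <=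
    4 * X * e + 4 * M ^+ 2 * fine (mu E) * \sum_(0 <= k < K) c k ^+ 2.
Proof.
move=> cX tail; have c2 := (ell2_le cX).1.
have X0 : 0 <= X by have := cX 0%N; rewrite big_geq.
set B := (Y in _ <= Y).
suff approx N : (K <= N)%N -> Rint (fun x => Vstar E v c x ^+ 2) <=
    B + 2 * Rint (fun x => (Vpartial E v c N x - Vstar E v c x) ^+ 2).
  rewrite -[leRHS]addr0 -[Y in _ + Y](mulr0 2).
  apply: (@ler_cvg_to _ \oo _ _ (fun=> Rint (fun x => Vstar E v c x ^+ 2))
    (fun N => B + 2 * Rint (fun x => (Vpartial E v c N x - Vstar E v c x) ^+ 2))).
  - exact: cvg_cst.
  - apply: cvgD; first exact: cvg_cst.
    by apply: cvgM; [exact: cvg_cst | exact: Rintegral_Vpartial_sub_Vstar_cvg0].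
  - by near=> N; apply: approx; near: N; exists K.
move=> KN; apply: le_trans (Rintegral_Vstar_sqr_le_Vpartial N c2) _.
rewrite lerD2r /B; apply: le_trans (ler_wpM2l _ (Rintegral_Vpartial_sqr_le KN cX)) _ => //.
rewrite mulrDr lerD //; first by rewrite !mulrA -natrM ler_wpM2l ?mulr_ge0.
by rewrite le_eqVlt; apply/orP; left; apply/eqP; ring.
Unshelve. all: by end_near. Qed.

Lemma Vstar_compact :
  compact_operator ell2 ell2norm (L2on mu E) (L2norm mu) (Vstar E v).
Proof.
split => [c|a c c'|u u2 [B uB]]; [exact: Vstar_L2on | exact: Vstar_linear |].
have [phi phi_inc [y yB cv]] := ell2_bounded_subseq (fun n => ell2norm_sqr_le (u2 n) (uB n)).
pose dd n := u (phi n) - y.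
have ddB n N : \sum_(0 <= k < N) dd n k ^+ 2 <= 4 * B ^+ 2.
  exact: sum_sqrB_le (ell2norm_sqr_le (u2 _) (uB _) N) (yB N).
have y2 := (ell2_le yB).1; have dd2 n := (ell2_le (ddB n)).1.
exists phi, (Vstar E v y); split; [exact: Vstar_L2on | exact: increasing_seq_homo_ltn |].
have Vdd n : Vstar E v (u (phi n)) - Vstar E v y = Vstar E v (dd n).
  by rewrite /dd (addrC (u (phi n))) -[- y]scaleN1r Vstar_linear ?u2 // scaleN1r addrC.
rewrite (_ : (fun n => _) = fun n => Num.sqrt (Rint (fun x => Vstar E v (dd n) x ^+ 2))).
  apply: cvg_sqrt0; apply: (@cvg0_of_approx _ _
    (fun K n => 4 * M ^+ 2 * fine (mu E) * \sum_(0 <= k < K) dd n k ^+ 2) (4 * (4 * B ^+ 2))).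
  - by have := sqr_ge0 B; lra.
  - by move=> n; apply: Rintegral_ge0 => x _; exact: sqr_ge0.
  - move=> K; rewrite -[X in _ --> X](mulr0 (4 * M ^+ 2 * fine (mu E))).
    by apply: cvgM; [exact: cvg_cst | exact: cvg_sum_sqr_sub0 cv].
  move=> e e0; have [K HK] := summable_tail_le vE_sqnorm_ge0 sum_vE_sqnorm_le e0.
  exists K; apply: nearW => n; rewrite addrC.
  exact: Rintegral_Vstar_sqr_le (ddB n) HK.
by apply/funext => n; rewrite Vdd L2normE //; exact: (Vstar_L2on (dd2 n)).1.
Qed.

End square_summable_family.

Unset Implicit Arguments.

Theorem lemma2p2 (d : measure_display) (T : measurableType d) (R : realType)
  (mu : {measure set T -> \bar R}) (E : set T)
  (mE : measurable E) (E_pos : (0 < mu E)%E) (E_fin : (mu E < +oo)%E)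
  (v : nat -> T -> R) (v_L2 : forall k, L2 mu (v k)) (M : R)
  (v_bnd : forall x, E x -> (\sum_(k <oo) ((v k x) ^+ 2)%:E <= (M ^+ 2)%:E)%E) :
  compact_operator (L2on mu E) (L2norm mu) ell2 ell2norm (Vop mu v) /\
  ((forall c, ell2 c ->
      (fun n => L2norm mu (Vpartial E v c n - Vstar E v c)) @ \oo --> (0 : R)) /\
   compact_operator ell2 ell2norm (L2on mu E) (L2norm mu) (Vstar E v)).
Proof.
split; first exact: Vop_compact mE E_fin v_L2 v_bnd.
split; last exact: Vstar_compact mE E_fin v_L2 v_bnd.
by move=> c c2; exact: Vpartial_cvg_L2 mE E_fin v_L2 v_bnd c c2.
Qed.
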